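(* Let $G=(V,E,\ell,\Phi)$ be a weak model that is strongly connected and trackable. Then $n_G(t)=O(1)$, i.e. there is a constant $C$ such that $n_G(t)\le C$ for all $t\ge 1$.
   Context: A (single-colored) weak model $G=(V,E,\ell,\Phi)$ consists of a finite set of nodes $V$, a set of directed edges $E\subseteq V\times V$, a finite set of colors $\Phi$, and a coloring $\ell:V\to\Phi$. A walk of length $t$ is a sequence $(x_1,\dots,x_t)$ of nodes with $(x_i,x_{i+1})\in E$ for all $1\le i<t$. For a color sequence $Y_{[t]}=(Y_1,\dots,Y_t)\in\Phi^t$, a hypothesis is a walk $(x_1,\dots,x_t)$ with $\ell(x_i)=Y_i$ for all $i$; $\mathcal H_G(Y_{[t]})$ denotes the set of hypotheses. Define $n_G(t)=\max_{Y_{[t]}\in\Phi^t}|\mathcal H_G(Y_{[t]})|$. The model is trackable if $n_G(t)=O(t^k)$ for some $k\ge 0$. It is strongly connected if for every ordered pair of nodes $u,w$ there is a directed path from $u$ to $w$. *)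

From mathcomp Require Import all_boot.
Set Implicit Arguments. Unset Strict Implicit. Unset Printing Implicit Defensive.

Definition is_walk (V : finType) (E : rel V) (t : nat) (x : t.-tuple V) : bool :=
  [forall i : 'I_t, forall j : 'I_t, (j == i.+1 :> nat) ==> E (tnth x i) (tnth x j)].

Definition hypotheses (V Phi : finType) (E : rel V) (ell : V -> Phi)
  (t : nat) (Y : t.-tuple Phi) : {set t.-tuple V} :=
  [set x : t.-tuple V | is_walk E x && [forall i : 'I_t, ell (tnth x i) == tnth Y i]].

Definition nG (V Phi : finType) (E : rel V) (ell : V -> Phi) (t : nat) : nat :=
  \max_(Y : t.-tuple Phi) #|hypotheses E ell Y|.

Definition trackable (V Phi : finType) (E : rel V) (ell : V -> Phi) : Prop :=
  exists k C N : nat, forall t, N <= t -> nG E ell t <= C * t ^ k.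

Definition strongly_connected (V : finType) (E : rel V) : Prop :=
  forall u w : V, connect E u w.

From mathcomp Require Import all_boot zify.

Set Implicit Arguments.
Unset Strict Implicit.
Unset Printing Implicit Defensive.

(* Call a pair of distinct walks with the same colour sequence and the same
   first and last nodes a diamond.  Without a diamond a hypothesis is
   determined by its endpoints, so n_G(t) <= (|V|+1)^2.  With a diamond, strong
   connectivity closes its two branches into two distinct equally coloured
   cycles through a node u; concatenating k of them in any order yields 2^k
   hypotheses for one colour sequence of length 1 + kL, which no polynomial
   bound survives. *)

Section WeakModel.
Variables (V Phi : finType) (E : rel V) (ell : V -> Phi).

Definition is_walk_seq (s : seq V) : bool :=
  if s is u :: s' then path E u s' else true.

Lemma is_walk_path t (x : t.-tuple V) : is_walk E x = is_walk_seq x.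
Proof.
have size_x := size_tuple x.
rewrite /is_walk; case def_x: (val x) size_x => [|u s] /= size_x.
  by apply/forallP => i; have := ltn_ord i; rewrite -{2}size_x.
apply/forallP/(pathP u) => [walk_x i lt_i_s | path_x i].
  have lt_i_t : i < t by lia.
  have lt_Si_t : i.+1 < t by lia.
  move/forallP/(_ (Ordinal lt_Si_t))/implyP/(_ (eqxx _)): (walk_x (Ordinal lt_i_t)).
  by rewrite !(tnth_nth u) def_x.
apply/forallP => j; apply/implyP => /eqP def_j.
have := ltn_ord j; rewrite def_j => lt_Si_t.
have lt_i_s : i < size s by lia.
by rewrite !(tnth_nth u) def_x /= def_j; apply: path_x.
Qed.

Lemma mem_hypotheses t (Y : t.-tuple Phi) (x : t.-tuple V) :
  (x \in hypotheses E ell Y) = is_walk_seq x && (map ell x == Y).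
Proof.
rewrite inE is_walk_path; congr andb.
apply/forallP/eqP => [ell_x | ell_x i].
  have -> : map ell x = map_tuple ell x by [].
  by congr val; apply: eq_from_tnth => i; rewrite tnth_map; apply/eqP.
have -> : Y = map_tuple ell x by apply: val_inj.
by rewrite tnth_map.
Qed.

Lemma nG_ge_card_walks (I : finType) (F : I -> seq V) (y : seq Phi) :
    injective F -> (forall i, is_walk_seq (F i)) -> (forall i, map ell (F i) = y) ->
  #|I| <= nG E ell (size y).
Proof.
move=> inj_F walk_F ell_F.
have size_F i : size (F i) = size y by rewrite -(ell_F i) size_map.
pose G i : (size y).-tuple V := tcast (size_F i) (in_tuple (F i)).
have val_G i : G i = F i :> seq V by rewrite /G val_tcast.
pose Y : (size y).-tuple Phi := in_tuple y.
apply: leq_trans (leq_bigmax Y).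
have inj_G : injective G by move=> i j eq_G; apply: inj_F; rewrite -!val_G eq_G.
rewrite -cardsT -(card_imset _ inj_G) subset_leq_card //.
apply/subsetP => _ /imsetP [i _ ->].
by rewrite mem_hypotheses val_G walk_F ell_F /=.
Qed.

Definition diamond : Prop := exists u (s1 s2 : seq V),
  [/\ s1 != s2, path E u s1, path E u s2, map ell s1 = map ell s2
     & last u s1 = last u s2].

Lemma ohead_rev_cons u (s : seq V) : ohead (rev (u :: s)) = Some (last u s).
Proof. by rewrite lastI rev_rcons. Qed.

Lemma walk_eq_endpoints (x y : seq V) : ~ diamond ->
    is_walk_seq x -> is_walk_seq y -> map ell x = map ell y ->
    ohead x = ohead y -> ohead (rev x) = ohead (rev y) ->
  x = y.
Proof.
move=> no_diamond; case: x => [|u s]; case: y => [|u' s'] //=.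
move=> path_s path_s' [_ ell_s] [eq_u]; subst u'.
rewrite !ohead_rev_cons => -[last_s].
apply/eqP; rewrite eqseq_cons eqxx /=; apply/negPn/negP => neq_s.
by apply: no_diamond; exists u, s, s'.
Qed.

Lemma card_hypotheses_no_diamond t (Y : t.-tuple Phi) : ~ diamond ->
  #|hypotheses E ell Y| <= #|V|.+1 ^ 2.
Proof.
move=> no_diamond; pose ends (x : t.-tuple V) := (ohead x, ohead (rev x)).
rewrite -(card_in_imset (f := ends)); last first.
  move=> x y; rewrite !mem_hypotheses => /andP [walk_x /eqP ell_x].
  move=> /andP [walk_y /eqP ell_y] [head_xy last_xy]; apply: val_inj.
  by apply: walk_eq_endpoints; rewrite // ell_x ell_y.
by apply: leq_trans (max_card _) _; rewrite card_prod card_option.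
Qed.

Definition closed_walk (u : V) (c : seq V) : bool := path E u c && (last u c == u).

Lemma diamond_closed_walks : strongly_connected E -> diamond ->
  exists u (c1 c2 : seq V), [/\ c1 != c2, map ell c1 = map ell c2,
    closed_walk u c1 & closed_walk u c2].
Proof.
move=> strong [u [s1 [s2 [neq_s path_s1 path_s2 ell_s last_s]]]].
have /connectP [p path_p last_p] := strong (last u s1) u.
have size_s : size s1 = size s2 by rewrite -(size_map ell) ell_s size_map.
exists u, (s1 ++ p), (s2 ++ p); split.
- by rewrite eqseq_cat // eqxx andbT.
- by rewrite !map_cat ell_s.
- by rewrite /closed_walk cat_path last_cat path_s1 path_p -last_p /=.
- by rewrite /closed_walk cat_path last_cat path_s2 -last_s path_p -last_p /=.
Qed.

Section ClosedWalkWords.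
Variables (u : V) (c1 c2 : seq V).
Hypotheses (neq_c : c1 != c2) (ell_c : map ell c1 = map ell c2).
Hypotheses (closed_c1 : closed_walk u c1) (closed_c2 : closed_walk u c2).

Lemma size_closed_walk_gt0 : 0 < size c1.
Proof.
rewrite lt0n size_eq0; apply: contraNneq neq_c => c1_nil.
by move: ell_c; rewrite c1_nil; case: c2.
Qed.

Definition closed_walk_word (bs : seq bool) : seq V :=
  flatten [seq if b then c1 else c2 | b <- bs].

Lemma closed_walk_word_cons b bs :
  closed_walk_word (b :: bs) = (if b then c1 else c2) ++ closed_walk_word bs.
Proof. by []. Qed.

Lemma size_closed_walk_word bs : size (closed_walk_word bs) = size bs * size c1.
Proof.
have size_c : size c2 = size c1 by rewrite -(size_map ell) -ell_c size_map.
elim: bs => [|b bs IH] //; rewrite closed_walk_word_cons size_cat IH mulSn.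
by case: b; rewrite ?size_c.
Qed.

Lemma path_closed_walk_word bs : path E u (closed_walk_word bs).
Proof.
case/andP: closed_c1 => path_c1 /eqP last_c1.
case/andP: closed_c2 => path_c2 /eqP last_c2.
elim: bs => [|b bs IH] //; rewrite closed_walk_word_cons cat_path.
by case: b; rewrite ?path_c1 ?last_c1 ?path_c2 ?last_c2.
Qed.

Lemma map_closed_walk_word bs cs : size bs = size cs ->
  map ell (closed_walk_word bs) = map ell (closed_walk_word cs).
Proof.
elim: bs cs => [|b bs IH] [|c cs] //= [size_bs].
rewrite !closed_walk_word_cons !map_cat (IH cs size_bs).
by case: b; case: c; rewrite ?ell_c.
Qed.

Lemma closed_walk_word_inj bs cs : size bs = size cs ->
  closed_walk_word bs = closed_walk_word cs -> bs = cs.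
Proof.
have size_c : size c2 = size c1 by rewrite -(size_map ell) -ell_c size_map.
elim: bs cs => [|b bs IH] [|c cs] //= [size_bs].
rewrite !closed_walk_word_cons => /eqP.
rewrite eqseq_cat; last by case: b; case: c; rewrite ?size_c.
case/andP => /eqP eq_bc /eqP/(IH cs size_bs) ->; congr cons.
by move: eq_bc neq_c; case: b; case: c => // ->; rewrite eqxx.
Qed.

Lemma nG_closed_walk_words k : 2 ^ k <= nG E ell (1 + k * size c1).
Proof.
pose F (bs : k.-tuple bool) := u :: closed_walk_word bs.
have inj_F : injective F.
  move=> bs cs [eq_bcs]; apply: val_inj.
  by apply: closed_walk_word_inj; rewrite ?size_tuple.
have := @nG_ge_card_walks _ F (map ell (u :: closed_walk_word (nseq k true))) inj_F.
rewrite card_tuple card_bool /= size_map size_closed_walk_word size_nseq.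
apply=> bs; first exact: path_closed_walk_word.
by rewrite /F /= (@map_closed_walk_word bs (nseq k true)) // size_tuple size_nseq.
Qed.

End ClosedWalkWords.

End WeakModel.

(* The witness is k = 2^(2n) for n large: then 1 + kL <= 2^(2n+L), and the
   resulting exponent C + (2n+L)K stays below n^2 < k. *)
Lemma exp2_dominates_poly (C K L N : nat) :
  exists k, N <= k /\ C * (1 + k * L) ^ K < 2 ^ k.
Proof.
have exp_mono m1 m2 e : m1 <= m2 -> m1 ^ e <= m2 ^ e.
  by case: e => // e; rewrite leq_exp2r.
have [n [N_le_n n_large]] : exists n, N <= n /\ C + L * K + 2 * K < n.
  by exists (N + C + L * K + 2 * K).+1; lia.
have n_lt : n < 2 ^ n by rewrite ltn_expl.
have L_lt : L < 2 ^ L by rewrite ltn_expl.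
have n_sq_lt : n * n < 2 ^ (n + n) by rewrite expnD ltn_mul.
move: (2 ^ (n + n)) n_sq_lt (expnD 2 (n + n) L) => k n_sq_lt expk.
exists k; split.
  apply: leq_trans N_le_n (leq_trans _ (ltnW n_sq_lt)).
  by apply: leq_pmulr; lia.
have k_gt0 : 0 < k by lia.
have base_le : 1 + k * L <= 2 ^ (n + n + L).
  rewrite expk; apply: (@leq_trans (k * L.+1)); first by rewrite mulnS leq_add2r.
  by rewrite leq_mul2l L_lt orbT.
have exponent_le : C + (n + n + L) * K <= k.
  have : n * (2 * K + 1) <= n * n by rewrite leq_mul2l; apply/orP; right; lia.
  lia.
have power_gt0 : 0 < (1 + k * L) ^ K by rewrite expn_gt0.
apply: (@leq_trans (2 ^ C * (1 + k * L) ^ K)); first by rewrite ltn_pmul2r // ltn_expl.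
apply: leq_trans (leq_mul (leqnn _) (exp_mono _ _ K base_le)) _.
by rewrite -expnM -expnD leq_exp2l.
Qed.

Lemma trackable_no_diamond (V Phi : finType) (E : rel V) (ell : V -> Phi) :
  strongly_connected E -> trackable E ell -> ~ diamond E ell.
Proof.
move=> strong [K [C [N poly_bound]]] /(diamond_closed_walks strong).
move=> [u [c1 [c2 [neq_c ell_c closed_c1 closed_c2]]]].
have [k [N_le_k exp_gt]] := exp2_dominates_poly C K (size c1) N.
have N_le_t : N <= 1 + k * size c1.
  apply: leq_trans N_le_k (leq_trans (leq_pmulr k _) (leq_addl _ _)).
  exact: size_closed_walk_gt0 neq_c ell_c.
have := leq_trans (nG_closed_walk_words neq_c ell_c closed_c1 closed_c2 k)
                  (poly_bound _ N_le_t).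
by rewrite leqNgt exp_gt.
Qed.

Theorem theorem1 (V Phi : finType) (E : rel V) (ell : V -> Phi) :
  strongly_connected E -> trackable E ell ->
  exists C : nat, forall t, 1 <= t -> nG E ell t <= C.
Proof.
move=> strong tracking; have no_diamond := trackable_no_diamond strong tracking.
exists (#|V|.+1 ^ 2) => t _.
by apply/bigmax_leqP => Y _; apply: card_hypotheses_no_diamond.
Qed.
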